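(* Let $(A,\succ,\prec)$ be an anti-pre-Novikov algebra and $\omega$ a non-degenerate bilinear form on $A$. Let $\omega^\sharp:A\to A^*$ be given by $\langle\omega^\sharp(x),y\rangle=\omega(x,y)$ and let $s_\omega\in A\otimes A$ be the element with $T_{s_\omega}=(\omega^\sharp)^{-1}$. Then $(A,\succ,\prec,\omega)$ is a quadratic anti-pre-Novikov algebra if and only if $s_\omega$ is symmetric and invariant.
   Context: $A$ is finite-dimensional over a field $k$. An anti-pre-Novikov algebra is $(A,\succ,\prec)$ such that with $x\circ y=x\succ y+x\prec y$: $(x\circ y-y\circ x)\succ z=y\succ(x\succ z)-x\succ(y\succ z)$; $x\prec(y\circ z)=(y\succ x)\prec z-(x\prec y)\prec z-y\succ(x\prec z)$; $(x\circ y)\succ z=-(x\succ z)\prec y$; $(x\prec y)\prec z=(x\prec z)\prec y$; $(x\circ y-y\circ x)\prec z=x\succ(y\circ z)-y\succ(x\circ z)$. It is quadratic with respect to $\omega$ if $\omega$ is non-degenerate, symmetric, and $\omega(x\prec y,z)=-\omega(x,z\circ y)$, $\omega(x\succ y,z)=\omega(x\circ z+z\circ x,y)$ for all $x,y,z$. For $r\in A\otimes A$, $T_r:A^*\to A$ is $\langle T_r(\zeta),\eta\rangle=\langle r,\zeta\otimes\eta\rangle$; $r$ is symmetric if $\tau(r)=r$ ($\tau$ the flip). With $L_\ast(x)y=x\ast y$, $R_\ast(x)y=y\ast x$, $x\odot y=x\succ y+y\prec x$, $L_{\star}=L_{\circ}+R_{\circ}$, $L_{\odot}=L_{\succ}+R_{\prec}$: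 $r$ is invariant if $(I\otimes L_{\star}(x)-L_{\succ}(x)\otimes I)r=0$ and $(L_{\circ}(x)\otimes I-I\otimes L_{\odot}(x))r=0$ for all $x\in A$. *)

(* A finite-dimensional k-vector space A is modelled as
   'rV[K]_n (coordinates in a fixed basis e_i = delta_mx 0 i); A* as 'rV[K]_n
   with the dual-basis pairing; A (x) A as 'M[K]_n (r = sum r_ij e_i (x) e_j). *)
From HB Require Import structures.
From mathcomp Require Import all_boot all_order all_algebra.
Set Implicit Arguments. Unset Strict Implicit. Unset Printing Implicit Defensive.
Import GRing.Theory.
Local Open Scope ring_scope.

Section Defs.
Variables (K : fieldType) (n : nat).
Notation A := 'rV[K]_n.

Definition bilinear_op (f : A -> A -> A) : Prop :=
  (forall (a : K) x y z, f (a *: x + y) z = a *: f x z + f y z) /\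
  (forall (a : K) x y z, f z (a *: x + y) = a *: f z x + f z y).

Definition bilinear_form (w : A -> A -> K) : Prop :=
  (forall (a : K) x y z, w (a *: x + y) z = a * w x z + w y z) /\
  (forall (a : K) x y z, w z (a *: x + y) = a * w z x + w z y).

Definition ebase (i : 'I_n) : A := delta_mx 0 i.

Definition omega_sharp (w : A -> A -> K) (x : A) : 'rV[K]_n :=
  \row_j w x (ebase j).

(* T_r : A* -> A,  <T_r(zeta), eta> = <r, zeta (x) eta> *)
Definition Tr (r : 'M[K]_n) (zeta : 'rV[K]_n) : A := zeta *m r.

(* (f (x) g) r for maps f g : A -> A *)
Definition tmap (f g : A -> A) (r : 'M[K]_n) : 'M[K]_n :=
  \matrix_(k, l) \sum_i \sum_j r i j * f (ebase i) 0 k * g (ebase j) 0 l.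

Definition tflip (r : 'M[K]_n) : 'M[K]_n := r^T.

Section Ops.
Variables (succ prec : A -> A -> A).
Definition circ x y := succ x y + prec x y.

Definition anti_pre_Novikov : Prop :=
  (forall x y z, succ (circ x y - circ y x) z = succ y (succ x z) - succ x (succ y z)) /\
  (forall x y z, prec x (circ y z) =
       prec (succ y x) z - prec (prec x y) z - succ y (prec x z)) /\
  (forall x y z, succ (circ x y) z = - prec (succ x z) y) /\
  (forall x y z, prec (prec x y) z = prec (prec x z) y) /\
  (forall x y z, prec (circ x y - circ y x) z = succ x (circ y z) - succ y (circ x z)).

Definition nondeg_form (w : A -> A -> K) : Prop :=
  forall x, (forall y, w x y = 0) -> x = 0.

Definition quadratic_form_APN (w : A -> A -> K) : Prop :=
  nondeg_form w /\ (forall x y, w x y = w y x) /\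
  (forall x y z, w (prec x y) z = - w x (circ z y)) /\
  (forall x y z, w (succ x y) z = w (circ x z + circ z x) y).

Definition L_star (x : A) : A -> A := fun y => circ x y + circ y x.
Definition L_odot (x : A) : A -> A := fun y => succ x y + prec y x.
Definition L_succ (x : A) : A -> A := fun y => succ x y.
Definition L_circ (x : A) : A -> A := fun y => circ x y.

Definition invariant_tensor (r : 'M[K]_n) : Prop :=
  (forall x, tmap id (L_star x) r - tmap (L_succ x) id r = 0) /\
  (forall x, tmap (L_circ x) id r - tmap id (L_odot x) r = 0).
End Ops.
End Defs.

(* Write omega(y, z) = y W z^T with W the Gram matrix of omega; the
   hypotheses on s say that s = W^-1.  For linear maps f, g with matrices F, G,
   the tensor identity (f (x) id) s = (id (x) g) s reads F^T s = s G, i.e.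
   W F^T = G W, i.e. omega(y, f z) = omega(g y, z).  Hence invariance of s says
   that L_succ(x), L_star(x) and L_circ(x), L_odot(x) are omega-adjoint pairs,
   while symmetry of s is symmetry of W.  For symmetric omega the first
   adjunction is the second quadratic identity, and given it the second
   adjunction is equivalent to the first quadratic identity. *)

From HB Require Import structures.
From mathcomp Require Import all_boot all_order all_algebra.
Set Implicit Arguments. Unset Strict Implicit. Unset Printing Implicit Defensive.
Import GRing.Theory.
Local Open Scope ring_scope.

Section RowLinearMaps.
Variables (K : fieldType) (n : nat).
Implicit Types (f g : 'rV[K]_n -> 'rV[K]_n) (M r : 'M[K]_n).

Lemma mul_rV_lin1_linear (m : nat) (f : 'rV[K]_n -> 'rV[K]_m) u :
  linear f -> u *m lin1_mx f = f u.
Proof.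
move=> lin_f.
pose F : {linear 'rV[K]_n -> 'rV[K]_m} :=
  HB.pack f (GRing.isLinear.Build _ _ _ _ f lin_f).
exact: (mul_rV_lin1 F).
Qed.

Lemma lin1_mx_id : lin1_mx (@id 'rV[K]_n) = 1%:M.
Proof. by apply/matrixP => i j; rewrite !mxE eqxx eq_sym. Qed.

Lemma rV_mulmx_id M : (forall u : 'rV[K]_n, u *m M = u) -> M = 1%:M.
Proof. by move=> MK; apply/row_matrixP => i; rewrite !rowE MK mulmx1. Qed.

Lemma linear_addf f g : linear f -> linear g -> linear (fun y => f y + g y).
Proof. by move=> lin_f lin_g a u v; rewrite lin_f lin_g scalerDr addrACA. Qed.

Lemma bilinear_op_linearl (op : 'rV[K]_n -> 'rV[K]_n -> 'rV[K]_n) z :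
  bilinear_op op -> linear (op^~ z).
Proof. by move=> [op_l _] a u v; rewrite op_l. Qed.

Lemma bilinear_op_linearr (op : 'rV[K]_n -> 'rV[K]_n -> 'rV[K]_n) z :
  bilinear_op op -> linear (op z).
Proof. by move=> [_ op_r] a u v; rewrite op_r. Qed.

Lemma bilinear_op_circ (succ prec : 'rV[K]_n -> 'rV[K]_n -> 'rV[K]_n) :
  bilinear_op succ -> bilinear_op prec -> bilinear_op (circ succ prec).
Proof.
move=> succ_bil prec_bil; split=> a x y z.
- exact: (linear_addf (bilinear_op_linearl z succ_bil) (bilinear_op_linearl z prec_bil)).
- exact: (linear_addf (bilinear_op_linearr z succ_bil) (bilinear_op_linearr z prec_bil)).
Qed.

Lemma tmap_mx f g r : tmap f g r = (lin1_mx f)^T *m r *m lin1_mx g.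
Proof.
apply/matrixP => k l; rewrite !mxE exchange_big /=.
apply: eq_bigr => j _; rewrite !mxE big_distrl /=.
by apply: eq_bigr => i _; rewrite !mxE mulrAC [_ * f _ _ _]mulrC mulrA.
Qed.

End RowLinearMaps.

Section GramForms.
Variables (K : fieldType) (n : nat).
Implicit Types (f g : 'rV[K]_n -> 'rV[K]_n) (M N : 'M[K]_n) (y z : 'rV[K]_n).

Definition form_mx M y z : K := (y *m M *m z^T) 0 0.

Lemma form_mx_inj M N : (forall y z, form_mx M y z = form_mx N y z) -> M = N.
Proof.
move=> eqMN; apply/matrixP => i j; have := eqMN (delta_mx 0 i) (delta_mx 0 j).
by rewrite /form_mx trmx_delta -!rowE -!colE !mxE.
Qed.

Lemma form_mx_tr M y z : form_mx M y z = form_mx M^T z y.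
Proof.
have tr11 (B : 'M[K]_1) : B 0 0 = B^T 0 0 by rewrite mxE.
by rewrite /form_mx tr11 !trmx_mul trmxK mulmxA.
Qed.

Lemma form_mx_linearl M g y z :
  linear g -> form_mx M (g y) z = form_mx (lin1_mx g *m M) y z.
Proof. by move=> lin_g; rewrite /form_mx -(mul_rV_lin1_linear y lin_g) !mulmxA. Qed.

Lemma form_mx_linearr M f y z :
  linear f -> form_mx M y (f z) = form_mx (M *m (lin1_mx f)^T) y z.
Proof.
by move=> lin_f; rewrite /form_mx -(mul_rV_lin1_linear z lin_f) trmx_mul !mulmxA.
Qed.

Lemma omega_sharp_linear (w : 'rV[K]_n -> 'rV[K]_n -> K) :
  bilinear_form w -> linear (omega_sharp w).
Proof. by move=> [w_l _] a u v; apply/rowP => j; rewrite !mxE w_l. Qed.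

Lemma bilinear_form_mx (w : 'rV[K]_n -> 'rV[K]_n -> K) :
  bilinear_form w -> w =2 form_mx (lin1_mx (omega_sharp w)).
Proof.
move=> w_bil y z; rewrite /form_mx mul_rV_lin1_linear; last exact: omega_sharp_linear.
have w_scalar : scalar (w y) by case: w_bil => _ w_r a u v; rewrite w_r.
pose wy : {scalar 'rV[K]_n} :=
  HB.pack (w y) (GRing.isLinear.Build _ _ _ _ _ w_scalar).
rewrite -[LHS]/(wy z) {1}[z]row_sum_delta linear_sum mxE.
by apply: eq_bigr => j _; rewrite linearZ !mxE mulrC.
Qed.

Section InverseGram.
Variables (w : 'rV[K]_n -> 'rV[K]_n -> K) (W s : 'M[K]_n).
Hypotheses (wE : w =2 form_mx W) (Ws : W *m s = 1%:M) (sW : s *m W = 1%:M).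

Lemma conj_inv_mx_eq M N : M *m s = s *m N <-> W *m M = N *m W.
Proof.
have intertwine (W' s' M' N' : 'M[K]_n) : W' *m s' = 1%:M -> s' *m W' = 1%:M ->
    M' *m s' = s' *m N' -> W' *m M' = N' *m W'.
  move=> W's' s'W' eqMN.
  by rewrite -[LHS]mulmx1 -s'W' mulmxA -(mulmxA W') eqMN mulmxA W's' mul1mx.
split; first exact: intertwine.
by move=> eqWMN; apply/esym/(intertwine s W); rewrite // eqWMN.
Qed.

Lemma trmx_sym_inv : W^T = W <-> s^T = s.
Proof.
have sym (W' s' : 'M[K]_n) : s' *m W' = 1%:M -> s'^T = s' -> W'^T = W'.
  move=> s'W' s'T.
  by rewrite -[LHS]mulmx1 -s'W' mulmxA -{1}s'T -trmx_mul s'W' trmx1 mul1mx.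
by split; [exact: sym | exact: sym].
Qed.

Lemma symmetric_form_inv : (forall y z, w y z = w z y) <-> s^T = s.
Proof.
apply: iff_trans trmx_sym_inv; split=> [w_sym | WT y z].
- by apply: form_mx_inj => y z; rewrite form_mx_tr trmxK -!wE w_sym.
- by rewrite !wE form_mx_tr WT.
Qed.

Lemma tmap_adjointP f g : linear f -> linear g ->
  tmap f id s = tmap id g s <-> forall y z, w y (f z) = w (g y) z.
Proof.
move=> lin_f lin_g; rewrite !tmap_mx lin1_mx_id trmx1 mul1mx mulmx1.
apply: (iff_trans (conj_inv_mx_eq _ _)); split=> [eqWF y z | adj].
- by rewrite !wE form_mx_linearr // form_mx_linearl // eqWF.
- apply: form_mx_inj => y z.
  by rewrite -form_mx_linearr // -form_mx_linearl // -!wE.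
Qed.

Lemma invariant_tensor_adjointP (succ prec : 'rV[K]_n -> 'rV[K]_n -> 'rV[K]_n) :
  bilinear_op succ -> bilinear_op prec ->
  invariant_tensor succ prec s <->
  (forall x y z, w y (L_succ succ x z) = w (L_star succ prec x y) z) /\
  (forall x y z, w y (L_circ succ prec x z) = w (L_odot succ prec x y) z).
Proof.
move=> succ_bil prec_bil; have circ_bil := bilinear_op_circ succ_bil prec_bil.
have lin_succ x : linear (L_succ succ x) by exact: bilinear_op_linearr.
have lin_circ x : linear (L_circ succ prec x) by exact: bilinear_op_linearr.
have lin_star x : linear (L_star succ prec x).
  exact: linear_addf (bilinear_op_linearr x circ_bil) (bilinear_op_linearl x circ_bil).
have lin_odot x : linear (L_odot succ prec x).
  exact: linear_addf (bilinear_op_linearr x succ_bil) (bilinear_op_linearl x prec_bil).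
split=> [[inv_succ inv_circ] | [adj_succ adj_circ]]; split=> x.
- exact/tmap_adjointP/esym/subr0_eq/inv_succ.
- exact/tmap_adjointP/subr0_eq/inv_circ.
- by rewrite (proj2 (tmap_adjointP (lin_succ x) (lin_star x)) (adj_succ x)) subrr.
- by rewrite (proj2 (tmap_adjointP (lin_circ x) (lin_odot x)) (adj_circ x)) subrr.
Qed.

End InverseGram.
End GramForms.

Section QuadraticIdentities.
Variables (K : fieldType) (n : nat) (succ prec : 'rV[K]_n -> 'rV[K]_n -> 'rV[K]_n).
Variable w : 'rV[K]_n -> 'rV[K]_n -> K.
Hypotheses (wDl : forall x y z, w (x + y) z = w x z + w y z)
           (w_sym : forall x y, w x y = w y x).

Lemma quadratic_adjointP :
  (forall x y z, w (prec x y) z = - w x (circ succ prec z y)) /\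
  (forall x y z, w (succ x y) z = w (circ succ prec x z + circ succ prec z x) y) <->
  (forall x y z, w y (L_succ succ x z) = w (L_star succ prec x y) z) /\
  (forall x y z, w y (L_circ succ prec x z) = w (L_odot succ prec x y) z).
Proof.
have succ_adjP : (forall x y z, w (succ x y) z = w (L_star succ prec x z) y) <->
    (forall x y z, w y (L_succ succ x z) = w (L_star succ prec x y) z).
  by split=> adj x y z; rewrite w_sym adj.
suff prec_adjP : (forall x y z, w (succ x y) z = w (L_star succ prec x z) y) ->
    (forall x y z, w (prec x y) z = - w x (circ succ prec z y)) <->
    (forall x y z, w y (L_circ succ prec x z) = w (L_odot succ prec x y) z).
  split=> [[prec_adj succ_adj] | [succ_adj circ_adj]].
  - by split; [exact/succ_adjP | exact/(prec_adjP succ_adj)].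
  - have succ_adj' := proj2 succ_adjP succ_adj.
    by split; [exact/(prec_adjP succ_adj') | exact: succ_adj'].
move=> succ_adj.
have odotE x y z : w (L_odot succ prec x y) z =
    w y (circ succ prec x z) + (w (prec y x) z + w y (circ succ prec z x)).
  by rewrite /L_odot wDl succ_adj wDl !(w_sym _ y) addrAC -addrA.
split=> [prec_adj x y z | circ_adj x y z].
- by rewrite odotE prec_adj addNr addr0.
- apply/eqP; rewrite -addr_eq0; apply/eqP/(addrI (w x (circ succ prec y z))).
  by rewrite addr0 -odotE -circ_adj.
Qed.

End QuadraticIdentities.

Theorem mainTheorem14 (K : fieldType) (n : nat)
  (succ prec : 'rV[K]_n -> 'rV[K]_n -> 'rV[K]_n)
  (omega : 'rV[K]_n -> 'rV[K]_n -> K) (s : 'M[K]_n) :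
  bilinear_op succ -> bilinear_op prec -> anti_pre_Novikov succ prec ->
  bilinear_form omega -> nondeg_form omega ->
  (forall x, Tr s (omega_sharp omega x) = x) ->
  (forall zeta, omega_sharp omega (Tr s zeta) = zeta) ->
  (quadratic_form_APN succ prec omega <-> (tflip s = s /\ invariant_tensor succ prec s)).
Proof.
move=> succ_bil prec_bil _ omega_bil omega_nondeg sharpK sharpVK.
set W := lin1_mx (omega_sharp omega).
have omegaE : omega =2 form_mx W := bilinear_form_mx omega_bil.
have sharpE x : omega_sharp omega x = x *m W.
  by rewrite mul_rV_lin1_linear //; exact: omega_sharp_linear.
have Ws : W *m s = 1%:M.
  by apply: rV_mulmx_id => x; rewrite mulmxA -sharpE; exact: sharpK.
have sW : s *m W = 1%:M.
  by apply: rV_mulmx_id => z; rewrite mulmxA -sharpE; exact: sharpVK.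
have omega_symP := symmetric_form_inv omegaE Ws sW.
have invariantP := invariant_tensor_adjointP omegaE Ws sW succ_bil prec_bil.
have omegaDl x y z : omega (x + y) z = omega x z + omega y z.
  by case: omega_bil => omega_l _; rewrite -{1}[x]scale1r omega_l mul1r.
split=> [[_ [omega_sym quad]] | [sT inv]].
- split; first exact/omega_symP.
  exact/invariantP/(quadratic_adjointP _ _ omegaDl omega_sym).
- have omega_sym := proj2 omega_symP sT.
  by split=> //; split=> //; exact/(quadratic_adjointP _ _ omegaDl omega_sym)/invariantP.
Qed.
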